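(* Let $f, g$ be real-valued functions on a Cartesian product $X = \prod_{i\in I} X_i$ whose difference sets $\Delta(f)$ and $\Delta(g)$ are finite. Then there exists $\alpha_0 \in (0, \infty]$, depending on $f$ and $g$, such that $f + \alpha g$ refines $f$ for every real $\alpha$ with $|\alpha| < \alpha_0$.
   Context: Two elements of $X$ are adjacent if they differ in exactly one coordinate. For $f, f'\colon X \to \mathbb{R}$, $f'$ refines $f$ if for all $\vec{x},\vec{x}' \in X$ having all but one coordinate the same, $f(\vec{x}) < f(\vec{x}')$ implies $f'(\vec{x}) < f'(\vec{x}')$. The difference set of $f$ is $\Delta(f) = \{f(\vec{x}') - f(\vec{x}) : \vec{x}, \vec{x}' \text{ adjacent}\}$. *)

From HB Require Import structures.
From mathcomp Require Import all_boot all_order all_algebra.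
From mathcomp Require Import all_classical all_reals.
From mathcomp Require Import ereal.
Set Implicit Arguments. Unset Strict Implicit. Unset Printing Implicit Defensive.
Import Order.TTheory GRing.Theory Num.Theory.
Local Open Scope ring_scope.
Local Open Scope classical_set_scope.

Definition prodX (I : Type) (X : I -> Type) := forall i : I, X i.

Definition adjacent (I : Type) (X : I -> Type) (x x' : prodX X) : Prop :=
  exists i : I, x i <> x' i /\ forall j : I, j <> i -> x j = x' j.

Definition all_but_one_same (I : Type) (X : I -> Type) (x x' : prodX X) : Prop :=
  exists i : I, forall j : I, j <> i -> x j = x' j.

Definition refines (R : realType) (I : Type) (X : I -> Type)
    (f' f : prodX X -> R) : Prop :=
  forall x x' : prodX X, all_but_one_same x x' -> f x < f x' -> f' x < f' x'.

Definition diff_set (R : realType) (I : Type) (X : I -> Type)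
    (f : prodX X -> R) : set R :=
  [set d | exists x x' : prodX X, adjacent x x' /\ d = f x' - f x].

From mathcomp Require Import all_boot all_order all_algebra.
From mathcomp Require Import all_classical all_reals.
From mathcomp Require Import ereal.
Import Order.TTheory GRing.Theory Num.Theory.
Local Open Scope ring_scope.
Local Open Scope classical_set_scope.

(* Every strict increase of f along an adjacent pair is at least some m > 0
   (the least positive element of the finite set Delta(f)), while every
   increment of g along an adjacent pair is at most some M in absolute value.
   Hence for |alpha| < m / M the perturbation alpha * g changes an adjacent
   difference of f by less than m and cannot reverse a strict inequality. *)

Section FiniteSetBounds.
Variable R : realDomainType.

Lemma finite_set_pos_lower_bound (A : set R) : finite_set A ->
  exists2 m : R, 0 < m & forall d, A d -> 0 < d -> m <= d.
Proof.
move=> /finite_seqP[s defA].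
exists (\big[Order.min/1]_(d <- s | 0 < d) d); first exact: lt_bigmin.
move=> d Ad d_gt0; apply: ge_bigmin_seq => //.
by have := Ad; rewrite defA.
Qed.

Lemma finite_set_norm_bound (A : set R) : finite_set A ->
  exists2 M : R, 0 < M & forall d, A d -> `|d| <= M.
Proof.
move=> /finite_seqP[s defA].
exists (\big[Order.max/1]_(d <- s) `|d|).
  exact: lt_le_trans (bigmax_ge_id _ _ _ _).
move=> d Ad; apply: le_bigmax_seq => //.
by have := Ad; rewrite defA.
Qed.

Lemma ltr_perturbD (a b e e' : R) : `|e' - e| < b - a -> a + e < b + e'.
Proof. by rewrite ltr_norml ltrNl opprB ltrBlDr addrAC ltrBrDl => /andP[]. Qed.

End FiniteSetBounds.

Section Refinement.
Variables (R : realType) (I : Type) (X : I -> Type).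
Implicit Types (f h : prodX X -> R).

Lemma all_but_one_same_adjacent (x x' : prodX X) :
  all_but_one_same x x' -> x <> x' -> adjacent x x'.
Proof.
move=> [i same_off_i] neq_xx'; exists i; split=> // same_at_i.
apply: neq_xx'; apply: functional_extensionality_dep => j.
by have [->|/same_off_i] := pselect (j = i).
Qed.

Lemma diff_setP f (x x' : prodX X) : adjacent x x' -> diff_set f (f x' - f x).
Proof. by exists x, x'. Qed.

Lemma refines_addr f h :
  (forall x x', adjacent x x' -> f x < f x' -> `|h x' - h x| < f x' - f x) ->
  refines (fun x => f x + h x) f.
Proof.
move=> small_h x x' same_xx' lt_fx; apply: ltr_perturbD; apply: small_h => //.
by apply: all_but_one_same_adjacent => // eq_xx'; rewrite eq_xx' ltxx in lt_fx.
Qed.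

End Refinement.

Theorem corollary2 (R : realType) (I : Type) (X : I -> Type)
    (f g : prodX X -> R) :
  finite_set (diff_set f) -> finite_set (diff_set g) ->
  exists alpha0 : \bar R, (0 < alpha0)%E /\
    forall alpha : R, (`|alpha|%:E < alpha0)%E ->
      refines (fun x => f x + alpha * g x) f.
Proof.
move=> /finite_set_pos_lower_bound[m m_gt0 m_le].
move=> /finite_set_norm_bound[M M_gt0 M_ge].
exists (m / M)%:E; split; first by rewrite lte_fin divr_gt0.
move=> a; rewrite lte_fin ltr_pdivlMr // => small_a.
apply: refines_addr => x x' adj lt_fx.
have dg_le : `|g x' - g x| <= M by apply/M_ge/diff_setP.
have m_le_df : m <= f x' - f x by apply: m_le; [exact: diff_setP | rewrite subr_gt0].
rewrite -mulrBr normrM; apply: le_lt_trans (ler_wpM2l _ dg_le) _ => //.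
exact: lt_le_trans small_a m_le_df.
Qed.
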